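(* For every target rate $r>0$, $P_{\rm r}>0$ and $\mathcal C_x\in[0,1)$, \[ \mathcal P_{\rm sr}(P_{\rm r},\mathcal C_x)\ge 1-\frac{e^{-\frac{\Psi_r(\mathcal C_x)}{P_{\rm s}\theta_{\rm sr}}}}{\Gamma(m_{\rm rr})\theta_{\rm rr}^{m_{\rm rr}}}\sum_{m=0}^{m_{\rm sr}-1}\sum_{k=0}^{m}\binom{m}{k}\frac{P_{\rm r}^k\,\Gamma(k+m_{\rm rr})\left(\frac{\Psi_r(\mathcal C_x)}{P_{\rm s}\theta_{\rm sr}}\right)^m}{\Gamma(m+1)\left(\frac{P_{\rm r}\Psi_r(\mathcal C_x)}{P_{\rm s}\theta_{\rm sr}}+\frac1{\theta_{\rm rr}}\right)^{k+m_{\rm rr}}}=:\mathcal P^{\rm LB}_{\rm sr}(P_{\rm r},\mathcal C_x). \]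
   Context: Let $P_{\rm s}>0$, $P_{\rm r}>0$ be the source and relay transmit powers. For links $ij\in\{\mathrm{sr},\mathrm{rr},\mathrm{rd},\mathrm{sd}\}$ let $g_{ij}$ be mutually independent random channel gains, $g_{ij}$ gamma distributed with integer shape parameter $m_{ij}\ge1$ and scale $\theta_{ij}=\pi_{ij}/m_{ij}$, where $\pi_{ij}=\mathbb E[g_{ij}]>0$; i.e. $g_{ij}$ has density $x^{m_{ij}-1}e^{-x/\theta_{ij}}/(\Gamma(m_{ij})\theta_{ij}^{m_{ij}})$ for $x\ge0$. For a circularity coefficient $\mathcal C_x\in[0,1)$ define $R_{\rm sr}(P_{\rm r},\mathcal C_x)=\tfrac12\log_2\frac{(P_{\rm s}g_{\rm sr}+P_{\rm r}g_{\rm rr}+1)^2-(P_{\rm r}g_{\rm rr}\mathcal C_x)^2}{(P_{\rm r}g_{\rm rr}+1)^2-(P_{\rm r}g_{\rm rr}\mathcal C_x)^2}$. For a target rate $r>0$ put $\gamma=2^{2r}-1$ and $\Psi_r(x)=\sqrt{1+\gamma(1-x^2)}-1$. The S–R outage probability is $\mathcal P_{\rm sr}=\mathbb P\{R_{\rm sr}<r\}$. *)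

From Stdlib Require Import Reals Lra Lia Arith Factorial.
Open Scope R_scope.

Definition is_RInt (f : R -> R) (a b v : R) : Prop :=
  exists pr : Riemann_integrable f a b, RiemannInt pr = v.

Definition is_RInt_0_infty (f : R -> R) (l : R) : Prop :=
  (forall L, 0 <= L -> exists v, is_RInt f 0 L v) /\
  (forall eps, 0 < eps -> exists M, forall L v, M <= L -> is_RInt f 0 L v ->
      Rabs (v - l) < eps).

(* Gamma density with integer shape m >= 1 and scale theta, on x >= 0.
   Gamma(m) = (m-1)! for integer m >= 1. *)
Definition gamma_pdf (m : nat) (theta x : R) : R :=
  x ^ (m - 1) * exp (- x / theta) / (INR (fact (m - 1)) * theta ^ m).

Definition log2 (x : R) : R := ln x / ln 2.

Definition Rsr (Ps Pr Cx gsr grr : R) : R :=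
  / 2 * log2 (((Ps * gsr + Pr * grr + 1) ^ 2 - (Pr * grr * Cx) ^ 2) /
              ((Pr * grr + 1) ^ 2 - (Pr * grr * Cx) ^ 2)).

Definition indic_lt (a b : R) : R := if Rlt_dec a b then 1 else 0.

Definition gam (r : R) : R := Rpower 2 (2 * r) - 1.

Definition Psi (r x : R) : R := sqrt (1 + gam r * (1 - x ^ 2)) - 1.

(* p is the S-R outage probability P{R_sr < r} for independent
   g_sr ~ Gamma(m_sr, theta_sr), g_rr ~ Gamma(m_rr, theta_rr), computed as
   the iterated integral int_0^oo f_rr(y) (int_0^oo 1{R_sr(x,y)<r} f_sr(x) dx) dy. *)
Definition is_outage_sr (Ps Pr Cx r : R) (msr mrr : nat) (thsr thrr p : R)
  : Prop :=
  exists h : R -> R,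
    (forall y, 0 <= y ->
       is_RInt_0_infty
         (fun x => indic_lt (Rsr Ps Pr Cx x y) r * gamma_pdf msr thsr x) (h y)) /\
    is_RInt_0_infty (fun y => gamma_pdf mrr thrr y * h y) p.

Definition P_LB_sr (Ps Pr Cx r : R) (msr mrr : nat) (thsr thrr : R) : R :=
  let a := Psi r Cx / (Ps * thsr) in
  1 - exp (- a) / (INR (fact (mrr - 1)) * thrr ^ mrr) *
      sum_f_R0 (fun m =>
        sum_f_R0 (fun k =>
          C m k * (Pr ^ k * INR (fact (k + mrr - 1)) * a ^ m) /
          (INR (fact m) * (Pr * a + / thrr) ^ (k + mrr))) m) (msr - 1).

(* Given the relay gain [y], the S-R link is in outage exactly when the source gain lies
   below a threshold [x*(y)], so the outage probability is the expectation of
   [F_sr(x*(y))], [F_sr] the gamma CDF.  Since [x*(y) >= Psi_r(C_x) (1 + P_r y) / P_s]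
   and [1 - F_sr(t) = e^(-t/th) sum_(j < m_sr) (t/th)^j / j!], replacing [x*(y)] by this
   linear bound and expanding [(1 + P_r y)^m] binomially leaves the gamma integrals
   [int_0^oo y^(k+m_rr-1) e^(-c y) dy = (k+m_rr-1)! / c^(k+m_rr)].  On [[0, L]] this gives
   [int_0^L >= F_rr(L) - (1 - P^LB)], and [F_rr(L) -> 1]. *)

From Pilot Require Import Defs.
From Stdlib Require Import Reals Lra Lia Psatz Classical Factorial.
From Coquelicot Require Import Coquelicot.
Open Scope R_scope.

Ltac field_nonzero :=
  field; repeat split;
  try solve [lra | apply INR_fact_neq_0 | apply pow_nonzero; lra
            | apply not_0_INR; lia].

Definition pow_exp_poly (n : nat) (c t : R) : R :=
  sum_f_R0 (fun j => INR (fact n) / INR (fact j) * t ^ j / c ^ (n + 1 - j)) n.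

Definition pow_exp_antideriv (n : nat) (c t : R) : R :=
  - exp (- c * t) * pow_exp_poly n c t.

Section PowExp.
Variables (c : R).
Hypothesis (Hc : 0 < c).

(* The integration-by-parts recurrence for [int t^n e^(-ct) dt]. *)
Lemma pow_exp_poly_S n t :
  pow_exp_poly (S n) c t = t ^ S n / c + INR (S n) / c * pow_exp_poly n c t.
Proof.
  unfold pow_exp_poly; rewrite tech5, scal_sum, Rplus_comm.
  replace (S n + 1 - S n)%nat with 1%nat by lia.
  f_equal.
  - rewrite fact_simpl, mult_INR. field_nonzero.
  - apply sum_eq; intros j Hj.
    replace (S n + 1 - j)%nat with (S (n + 1 - j)) by lia.
    rewrite fact_simpl, mult_INR; simpl pow.
    field_nonzero.
Qed.

Lemma is_derive_pow_exp_antideriv n t :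
  is_derive (pow_exp_antideriv n c) t (t ^ n * exp (- c * t)).
Proof.
  revert t; induction n as [|n IH]; intros t.
  - unfold pow_exp_antideriv, pow_exp_poly; simpl sum_f_R0.
    auto_derive; [exact I | simpl; field_nonzero].
  - apply is_derive_ext with
      (fun t => - t ^ S n * exp (- c * t) / c + INR (S n) / c * pow_exp_antideriv n c t).
    { intros u; unfold pow_exp_antideriv; rewrite pow_exp_poly_S.
      simpl; field_nonzero. }
    replace (t ^ S n * exp (- c * t)) with
      (- (INR (S n) * t ^ n) * exp (- c * t) / c + t ^ S n * exp (- c * t)
       + INR (S n) / c * (t ^ n * exp (- c * t)))
      by (rewrite S_INR; simpl; field_nonzero).
    apply (is_derive_plus (fun t => - t ^ S n * exp (- c * t) / c)
             (fun t => INR (S n) / c * pow_exp_antideriv n c t)).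
    + auto_derive; [exact I | simpl; field_nonzero].
    + exact (is_derive_scal _ t (INR (S n) / c) _ (IH t)).
Qed.

Lemma pow_exp_poly_0 n : pow_exp_poly n c 0 = INR (fact n) / c ^ (n + 1).
Proof.
  induction n as [|n IH].
  - unfold pow_exp_poly; simpl; field_nonzero.
  - rewrite pow_exp_poly_S, IH, pow_i, fact_simpl, mult_INR by lia.
    replace (S n + 1)%nat with (S (n + 1)) by lia; simpl; field_nonzero.
Qed.

Lemma pow_exp_poly_ge_0 n t : 0 <= t -> 0 <= pow_exp_poly n c t.
Proof.
  intros Ht; apply cond_pos_sum; intros j.
  apply Rmult_le_pos; [apply Rmult_le_pos; [apply Rmult_le_pos |] |].
  - apply pos_INR.
  - apply Rlt_le, Rinv_0_lt_compat, INR_fact_lt_0.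
  - apply pow_le; lra.
  - apply Rlt_le, Rinv_0_lt_compat, pow_lt; lra.
Qed.

Lemma pow_exp_antideriv_0 n :
  pow_exp_antideriv n c 0 = - (INR (fact n) / c ^ (n + 1)).
Proof. unfold pow_exp_antideriv; rewrite pow_exp_poly_0, Rmult_0_r, exp_0; ring. Qed.

Lemma pow_exp_antideriv_le_0 n t : 0 <= t -> pow_exp_antideriv n c t <= 0.
Proof.
  intros Ht; unfold pow_exp_antideriv.
  assert (H := pow_exp_poly_ge_0 n t Ht); assert (H' := exp_pos (- c * t)); nra.
Qed.

Lemma is_RInt_pow_exp n a b :
  is_RInt (fun t => t ^ n * exp (- c * t)) a b
    (pow_exp_antideriv n c b - pow_exp_antideriv n c a).
Proof.
  apply (is_RInt_derive (pow_exp_antideriv n c)).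
  - intros; apply is_derive_pow_exp_antideriv.
  - intros x _; apply (ex_derive_continuous (V := R_NormedModule)).
    auto_derive; exact I.
Qed.

End PowExp.

Definition poisson_cdf (n : nat) (u : R) : R :=
  exp (- u) * sum_f_R0 (fun j => u ^ j / INR (fact j)) n.

(* Shape [S n], scale [th]: as in [gamma_pdf], the shape enters through its predecessor. *)
Definition gamma_cdf (n : nat) (th t : R) : R := 1 - poisson_cdf n (t / th).

Lemma exp_partial_sum_ge_0 n u : 0 <= u -> 0 <= sum_f_R0 (fun j => u ^ j / INR (fact j)) n.
Proof.
  intros Hu; apply cond_pos_sum; intros j.
  apply Rmult_le_pos; [apply pow_le; lra | apply Rlt_le, Rinv_0_lt_compat, INR_fact_lt_0].
Qed.

Lemma poisson_cdf_ge_0 n u : 0 <= u -> 0 <= poisson_cdf n u.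
Proof.
  intros Hu; apply Rmult_le_pos; [apply Rlt_le, exp_pos | apply exp_partial_sum_ge_0; lra].
Qed.

Lemma poisson_cdf_0 n : poisson_cdf n 0 = 1.
Proof.
  unfold poisson_cdf; rewrite Ropp_0, exp_0, Rmult_1_l.
  induction n as [|n IH]; simpl in *; [field | rewrite IH; unfold Rdiv; ring].
Qed.

(* [e^u >= u^(n+1)/(n+1)!] against a partial sum of size [<= (n+1) u^n]. *)
Lemma poisson_cdf_le n u : 1 <= u ->
  poisson_cdf n u <= INR (S n) * INR (fact (S n)) / u.
Proof.
  intros Hu.
  assert (Hsum : sum_f_R0 (fun j => u ^ j / INR (fact j)) n <= INR (S n) * u ^ n).
  { rewrite <- (Rmult_comm (u ^ n)), <- sum_cte.
    apply sum_Rle; intros j Hj.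
    apply Rle_trans with (u ^ j); [| apply Rle_pow; [lra | lia]].
    rewrite <- (Rmult_1_r (u ^ j)) at 2; apply Rmult_le_compat_l; [apply pow_le; lra |].
    rewrite <- Rinv_1; apply Rinv_le_contravar; [lra |].
    apply (le_INR 1), lt_O_fact. }
  assert (Hexp : u ^ S n / INR (fact (S n)) <= exp u).
  { eapply Rle_trans; [| apply (exp_ge_taylor u (S n)); lra].
    rewrite tech5.
    assert (H := exp_partial_sum_ge_0 n u ltac:(lra)); lra. }
  assert (Hpow : 0 < u ^ S n) by (apply pow_lt; lra).
  assert (Hfact := INR_fact_lt_0 (S n)).
  unfold poisson_cdf; rewrite exp_Ropp.
  apply Rle_trans with (/ (u ^ S n / INR (fact (S n))) * (INR (S n) * u ^ n)).
  - apply Rmult_le_compat; try apply Rlt_le, Rinv_0_lt_compat, exp_pos;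
      [apply exp_partial_sum_ge_0; lra | | exact Hsum].
    apply Rinv_le_contravar; [apply Rdiv_lt_0_compat |]; lra.
  - right; change (u ^ S n) with (u * u ^ n); field_nonzero.
Qed.

Lemma gamma_pdf_ge_0 m th x : 0 < th -> 0 <= x -> 0 <= gamma_pdf m th x.
Proof.
  intros Hth Hx; unfold gamma_pdf, Rdiv.
  apply Rmult_le_pos; [apply Rmult_le_pos; [apply pow_le; lra | apply Rlt_le, exp_pos] |].
  apply Rlt_le, Rinv_0_lt_compat, Rmult_lt_0_compat; [apply INR_fact_lt_0 | apply pow_lt; lra].
Qed.

Lemma continuous_gamma_pdf m th x : continuous (gamma_pdf m th) x.
Proof.
  apply (ex_derive_continuous (V := R_NormedModule)); unfold gamma_pdf.
  auto_derive; exact I.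
Qed.

Section GammaCdf.
Variables (n : nat) (th : R).
Hypothesis (Hth : 0 < th).

Lemma gamma_cdf_antideriv t :
  gamma_cdf n th t =
  (pow_exp_antideriv n (/ th) t - pow_exp_antideriv n (/ th) 0) / (INR (fact n) * th ^ S n).
Proof.
  rewrite pow_exp_antideriv_0 by (apply Rinv_0_lt_compat; lra).
  assert (Hpoly : pow_exp_poly n (/ th) t =
    INR (fact n) * th ^ S n * sum_f_R0 (fun j => (t / th) ^ j / INR (fact j)) n).
  { unfold pow_exp_poly; rewrite scal_sum.
    apply sum_eq; intros j Hj.
    unfold Rdiv; rewrite Rpow_mult_distr, !pow_inv.
    replace (S n) with ((n + 1 - j) + j)%nat by lia; rewrite pow_add; field_nonzero. }
  unfold pow_exp_antideriv, gamma_cdf, poisson_cdf; rewrite Hpoly, pow_inv.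
  replace (- / th * t) with (- (t / th)) by (field; lra).
  replace (n + 1)%nat with (S n) by lia; field_nonzero.
Qed.

Lemma is_RInt_gamma_pdf a b :
  is_RInt (gamma_pdf (S n) th) a b (gamma_cdf n th b - gamma_cdf n th a).
Proof.
  rewrite !gamma_cdf_antideriv.
  set (K := INR (fact n) * th ^ S n); set (A := pow_exp_antideriv n (/ th)).
  replace ((A b - A 0) / K - (A a - A 0) / K) with (scal (/ K) (A b - A a))
    by (unfold K, scal; simpl; unfold mult; simpl; field_nonzero).
  apply (is_RInt_ext (fun t => scal (/ K) (t ^ n * exp (- / th * t)))).
  - intros x _; unfold gamma_pdf, K, scal; simpl; unfold mult; simpl.
    rewrite Nat.sub_0_r; replace (- x / th) with (- / th * x) by (field; lra); field_nonzero.
  - apply (is_RInt_scal (V := R_NormedModule)), is_RInt_pow_exp, Rinv_0_lt_compat; lra.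
Qed.

Lemma gamma_cdf_0 : gamma_cdf n th 0 = 0.
Proof. unfold gamma_cdf; rewrite Rdiv_0_l, poisson_cdf_0; ring. Qed.

Lemma gamma_cdf_le t1 t2 : 0 <= t1 -> t1 <= t2 -> gamma_cdf n th t1 <= gamma_cdf n th t2.
Proof.
  intros H1 H12.
  enough (0 <= gamma_cdf n th t2 - gamma_cdf n th t1) by lra.
  apply (is_RInt_ge_0 _ _ _ _ H12 (is_RInt_gamma_pdf t1 t2)).
  intros x Hx; apply gamma_pdf_ge_0; lra.
Qed.

Lemma gamma_cdf_ge_0 t : 0 <= t -> 0 <= gamma_cdf n th t.
Proof. intros Ht; rewrite <- gamma_cdf_0; apply gamma_cdf_le; lra. Qed.

Lemma gamma_cdf_le_1 t : 0 <= t -> gamma_cdf n th t <= 1.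
Proof.
  intros Ht; unfold gamma_cdf.
  assert (0 <= poisson_cdf n (t / th)) by (apply poisson_cdf_ge_0, Rdiv_le_0_compat; lra).
  lra.
Qed.

Lemma continuous_gamma_cdf t : continuous (gamma_cdf n th) t.
Proof.
  apply (continuous_ext (fun t => (pow_exp_antideriv n (/ th) t - pow_exp_antideriv n (/ th) 0)
                                  / (INR (fact n) * th ^ S n))).
  { intros; symmetry; apply gamma_cdf_antideriv. }
  apply (ex_derive_continuous (V := R_NormedModule)).
  auto_derive; eexists; apply is_derive_pow_exp_antideriv, Rinv_0_lt_compat; lra.
Qed.

Lemma gamma_cdf_near_1 eps : 0 < eps -> exists t, 0 <= t /\ 1 - eps < gamma_cdf n th t.
Proof.
  intros Heps.
  set (N := INR (S n) * INR (fact (S n))).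
  assert (HN : 0 < N) by (apply Rmult_lt_0_compat; [apply lt_0_INR; lia | apply INR_fact_lt_0]).
  set (u := Rmax 1 (2 * N / eps)).
  assert (Hu1 : 1 <= u) by apply Rmax_l.
  assert (Hu2 : 2 * N / eps <= u) by apply Rmax_r.
  exists (u * th); split; [nra |].
  unfold gamma_cdf; replace (u * th / th) with u by (field; lra).
  assert (Hle := poisson_cdf_le n u Hu1); fold N in Hle.
  enough (N / u < eps) by lra.
  apply Rmult_lt_reg_r with u; [lra |].
  apply Rmult_le_compat_l with (r := eps) in Hu2; [| lra].
  replace (eps * (2 * N / eps)) with (2 * N) in Hu2 by (field; lra).
  replace (N / u * u) with N by (field; lra); lra.
Qed.

End GammaCdf.

Lemma ln_lt_iff_lt_exp q s : 0 < q -> (ln q < s <-> q < exp s).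
Proof.
  intros Hq; split; intros H.
  - rewrite <- (exp_ln q Hq); apply exp_increasing, H.
  - rewrite <- (ln_exp s); apply ln_increasing; assumption.
Qed.

Lemma pow2_lt_iff_lt_sqrt u v : 0 <= u -> 0 <= v -> (u ^ 2 < v <-> u < sqrt v).
Proof.
  intros Hu Hv; split; intros H.
  - rewrite <- (sqrt_pow2 u Hu); apply sqrt_lt_1; [apply pow_le |..]; assumption.
  - pose proof (sqrt_sqrt v Hv); pose proof (sqrt_pos v); nra.
Qed.

Lemma gam_pos r : 0 < r -> 0 < gam r.
Proof.
  intros Hr; unfold gam, Rpower.
  assert (0 < ln 2) by (rewrite <- ln_1; apply ln_increasing; lra).
  assert (1 < exp (2 * r * ln 2)) by (rewrite <- exp_0; apply exp_increasing; nra).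
  lra.
Qed.

Lemma Psi_ge_0 r Cx : 0 < r -> 0 <= Cx < 1 -> 0 <= Psi r Cx.
Proof.
  intros Hr HC; unfold Psi; pose proof (gam_pos r Hr).
  assert (0 <= 1 - Cx ^ 2) by nra.
  assert (1 <= sqrt (1 + gam r * (1 - Cx ^ 2)))
    by (rewrite <- sqrt_1 at 1; apply sqrt_le_1_alt; nra).
  lra.
Qed.

Section Channel.
Variables (Ps Pr Cx r : R).
Hypotheses (HPs : 0 < Ps) (HPr : 0 < Pr) (Hr : 0 < r) (HCx0 : 0 <= Cx) (HCx1 : Cx < 1).

Definition rate_radicand (y : R) : R :=
  (gam r + 1) * ((Pr * y + 1) ^ 2 - (Pr * y * Cx) ^ 2) + (Pr * y * Cx) ^ 2.

Definition rate_threshold (y : R) : R := (sqrt (rate_radicand y) - Pr * y - 1) / Ps.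

Lemma rate_denominator_pos y : 0 <= y -> 0 < (Pr * y + 1) ^ 2 - (Pr * y * Cx) ^ 2.
Proof.
  intros Hy; assert (0 <= Pr * y) by nra.
  assert (0 <= Pr * y * Cx <= Pr * y) by nra; nra.
Qed.

Lemma rate_radicand_pos y : 0 <= y -> 0 < rate_radicand y.
Proof.
  intros Hy; unfold rate_radicand.
  pose proof (rate_denominator_pos y Hy); pose proof (gam_pos r Hr).
  pose proof (pow2_ge_0 (Pr * y * Cx)); nra.
Qed.

Lemma Rsr_lt_iff x y : 0 <= x -> 0 <= y -> (Rsr Ps Pr Cx x y < r <-> x < rate_threshold y).
Proof.
  intros Hx Hy.
  pose proof (rate_denominator_pos y Hy) as HD; pose proof (rate_radicand_pos y Hy).
  assert (Hln2 : 0 < ln 2) by (rewrite <- ln_1; apply ln_increasing; lra).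
  set (D := (Pr * y + 1) ^ 2 - (Pr * y * Cx) ^ 2) in *.
  set (N := (Ps * x + Pr * y + 1) ^ 2 - (Pr * y * Cx) ^ 2).
  assert (D <= N).
  { unfold D, N; assert (0 <= Ps * x) by nra; assert (0 <= Pr * y) by nra; nra. }
  unfold Rsr, log2; fold D N.
  replace (/ 2 * (ln (N / D) / ln 2)) with (ln (N / D) / (2 * ln 2)) by (field; lra).
  rewrite Rlt_div_l, ln_lt_iff_lt_exp by (try apply Rdiv_lt_0_compat; lra).
  replace (exp (r * (2 * ln 2))) with (gam r + 1)
    by (unfold gam, Rpower; ring_simplify; f_equal; ring).
  rewrite Rlt_div_l by lra.
  unfold rate_threshold; rewrite <- Rlt_div_r by lra.
  transitivity ((Ps * x + Pr * y + 1) ^ 2 < rate_radicand y).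
  - unfold rate_radicand, N; fold D; split; lra.
  - rewrite pow2_lt_iff_lt_sqrt by nra; split; lra.
Qed.

Lemma Psi_le_rate_threshold y : 0 <= y -> Psi r Cx * (1 + Pr * y) / Ps <= rate_threshold y.
Proof.
  intros Hy; unfold rate_threshold, Psi.
  apply Rmult_le_compat_r; [apply Rlt_le, Rinv_0_lt_compat; lra |].
  pose proof (gam_pos r Hr).
  set (s := 1 + gam r * (1 - Cx ^ 2)).
  assert (0 <= 1 - Cx ^ 2) by nra.
  assert (0 <= s) by (unfold s; nra).
  assert (0 <= Pr * y) by nra.
  assert (sqrt s * (1 + Pr * y) = sqrt ((1 + Pr * y) ^ 2 * s))
    by (rewrite sqrt_mult, sqrt_pow2; [ring | lra | apply pow2_ge_0 | lra]).
  assert (sqrt ((1 + Pr * y) ^ 2 * s) <= sqrt (rate_radicand y)).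
  { apply sqrt_le_1;
      [apply Rmult_le_pos; [apply pow2_ge_0 | lra] | apply Rlt_le, rate_radicand_pos; lra |].
    unfold rate_radicand, s.
    assert (0 <= gam r * Cx ^ 2 * (1 + 2 * (Pr * y))) by (apply Rmult_le_pos; nra).
    nra. }
  nra.
Qed.

Lemma rate_threshold_ge_0 y : 0 <= y -> 0 <= rate_threshold y.
Proof.
  intros Hy; eapply Rle_trans; [| apply Psi_le_rate_threshold; lra].
  pose proof (Psi_ge_0 r Cx Hr (conj HCx0 HCx1)); assert (0 <= Pr * y) by nra.
  apply Rdiv_le_0_compat; [apply Rmult_le_pos |]; lra.
Qed.

End Channel.

Lemma Riemann_of_is_RInt f a b v : is_RInt f a b v -> Defs.is_RInt f a b v.
Proof.
  intros H; exists (ex_RInt_Reals_0 f a b (ex_intro _ v H)).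
  rewrite <- RInt_Reals; apply is_RInt_unique, H.
Qed.

Lemma Riemann_is_RInt_unique f a b v w : Defs.is_RInt f a b v -> is_RInt f a b w -> v = w.
Proof. intros [pr <-] H; rewrite <- RInt_Reals; apply is_RInt_unique, H. Qed.

Lemma is_RInt_0_infty_cutoff (f phi F : R -> R) (T : R) : 0 <= T ->
  (forall a b, is_RInt f a b (F b - F a)) ->
  (forall x, 0 < x < T -> phi x = f x) -> (forall x, T < x -> phi x = 0) ->
  is_RInt_0_infty phi (F T - F 0).
Proof.
  intros HT Hf Hlow Hhigh.
  assert (Htrunc : forall L, 0 <= L -> is_RInt phi 0 L (F (Rmin L T) - F 0)).
  { intros L HL.
    assert (Hhead : forall b, 0 <= b <= T -> is_RInt phi 0 b (F b - F 0)).
    { intros b Hb; apply (is_RInt_ext f); [| apply Hf].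
      intros x; rewrite Rmin_left, Rmax_right by lra; intros; symmetry; apply Hlow; lra. }
    destruct (Rle_lt_dec L T) as [HLT | HTL].
    - rewrite Rmin_left by lra; apply Hhead; lra.
    - rewrite Rmin_right by lra.
      replace (F T - F 0) with (plus (F T - F 0) (scal (L - T) 0))
        by (unfold scal, plus; simpl; unfold mult; simpl; ring).
      apply (is_RInt_Chasles (V := R_NormedModule) _ 0 T L); [apply Hhead; lra |].
      apply (is_RInt_ext (fun _ => 0)); [| apply (is_RInt_const (V := R_NormedModule))].
      intros x; rewrite Rmin_left, Rmax_right by lra; intros; symmetry; apply Hhigh; lra. }
  split.
  - intros L HL; eexists; apply Riemann_of_is_RInt, Htrunc, HL.
  - intros eps Heps; exists T; intros L v HTL Hv.
    rewrite (Riemann_is_RInt_unique _ _ _ _ _ Hv (Htrunc L ltac:(lra))), Rmin_right by lra.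
    rewrite Rminus_diag_eq, Rabs_R0 by reflexivity; exact Heps.
Qed.

(* The truncated integrals increase with [L]; their supremum is the improper integral. *)
Lemma is_RInt_0_infty_of_bounded (g : R -> R) (B : R) :
  (forall L, 0 <= L -> ex_RInt g 0 L) ->
  (forall x, 0 <= x -> 0 <= g x) ->
  (forall L, 0 <= L -> RInt g 0 L <= B) ->
  exists l, is_RInt_0_infty g l /\ forall L, 0 <= L -> RInt g 0 L <= l.
Proof.
  intros Hex Hpos HB.
  assert (Hmono : forall L1 L2, 0 <= L1 -> L1 <= L2 -> RInt g 0 L1 <= RInt g 0 L2).
  { intros L1 L2 H1 H12.
    assert (Hex12 : ex_RInt g L1 L2)
      by (apply (ex_RInt_Chasles_2 (V := R_CompleteNormedModule) g 0); [lra | apply Hex; lra]).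
    rewrite <- (RInt_Chasles (V := R_CompleteNormedModule) g 0 L1 L2) by (auto; apply Hex; lra).
    assert (0 <= RInt g L1 L2) by (apply RInt_ge_0; auto; intros; apply Hpos; lra).
    change (RInt g 0 L1 <= RInt g 0 L1 + RInt g L1 L2); lra. }
  set (E := fun v : R => exists L, 0 <= L /\ v = RInt g 0 L).
  destruct (completeness E) as [l [Hub Hlub]].
  { exists B; intros v [L [HL ->]]; apply HB, HL. }
  { exists (RInt g 0 0), 0; split; [lra | reflexivity]. }
  assert (Hle : forall L, 0 <= L -> RInt g 0 L <= l) by (intros L HL; apply Hub; exists L; auto).
  exists l; split; [split |]; [| | exact Hle].
  - intros L HL; exists (RInt g 0 L).
    apply Riemann_of_is_RInt, (RInt_correct (V := R_CompleteNormedModule)), Hex, HL.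
  - intros eps Heps.
    destruct (classic (exists L0, 0 <= L0 /\ l - eps < RInt g 0 L0)) as [[L0 [HL0 Hnear]] | Hfar].
    + exists L0; intros L v HL Hv.
      rewrite (Riemann_is_RInt_unique _ _ _ _ _ Hv (RInt_correct _ _ _ (Hex L ltac:(lra)))).
      pose proof (Hmono L0 L HL0 HL); pose proof (Hle L ltac:(lra)).
      rewrite Rabs_left1 by lra; lra.
    + exfalso; enough (l <= l - eps) by lra.
      apply Hlub; intros v [L [HL ->]]; apply Rnot_lt_le; intros Hlt; apply Hfar; eauto.
Qed.

Lemma is_RInt_sum_f_R0 (F : nat -> R -> R) (v : nat -> R) a b n :
  (forall i, (i <= n)%nat -> is_RInt (F i) a b (v i)) ->
  is_RInt (fun y => sum_f_R0 (fun i => F i y) n) a b (sum_f_R0 v n).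
Proof.
  induction n as [|n IH]; intros H; simpl; [apply H; lia |].
  apply (is_RInt_plus (V := R_NormedModule)); [apply IH; intros; apply H | apply H]; lia.
Qed.

Section Outage.
Variables (Ps Pr Cx r : R) (ns nr : nat) (ths thr : R).
Hypotheses (HPs : 0 < Ps) (HPr : 0 < Pr) (Hr : 0 < r) (HCx0 : 0 <= Cx) (HCx1 : Cx < 1).
Hypotheses (Hths : 0 < ths) (Hthr : 0 < thr).

(* Integrating out [g_sr] leaves this function of [g_rr = y]. *)
Definition outage_integrand (y : R) : R :=
  gamma_pdf (S nr) thr y * gamma_cdf ns ths (rate_threshold Ps Pr Cx r y).

Lemma is_RInt_0_infty_outage_given y : 0 <= y ->
  is_RInt_0_infty (fun x => indic_lt (Rsr Ps Pr Cx x y) r * gamma_pdf (S ns) ths x)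
    (gamma_cdf ns ths (rate_threshold Ps Pr Cx r y)).
Proof.
  intros Hy; pose proof (rate_threshold_ge_0 Ps Pr Cx r HPs HPr Hr HCx0 HCx1 y Hy).
  replace (gamma_cdf ns ths (rate_threshold Ps Pr Cx r y)) with
    (gamma_cdf ns ths (rate_threshold Ps Pr Cx r y) - gamma_cdf ns ths 0)
    by (rewrite gamma_cdf_0; ring).
  apply (is_RInt_0_infty_cutoff (gamma_pdf (S ns) ths)); auto.
  - intros; apply is_RInt_gamma_pdf, Hths.
  - intros x Hx; unfold indic_lt; destruct Rlt_dec as [_ | Hn]; [ring |].
    exfalso; apply Hn, Rsr_lt_iff; auto; lra.
  - intros x Hx; unfold indic_lt; destruct Rlt_dec as [Hlt | _]; [| ring].
    apply Rsr_lt_iff in Hlt; auto; lra.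
Qed.

Lemma outage_integrand_bounds y : 0 <= y ->
  0 <= outage_integrand y <= gamma_pdf (S nr) thr y.
Proof.
  intros Hy; unfold outage_integrand.
  pose proof (rate_threshold_ge_0 Ps Pr Cx r HPs HPr Hr HCx0 HCx1 y Hy).
  pose proof (gamma_pdf_ge_0 (S nr) thr y Hthr Hy).
  pose proof (gamma_cdf_ge_0 ns ths Hths (rate_threshold Ps Pr Cx r y) ltac:(lra)).
  pose proof (gamma_cdf_le_1 ns ths Hths (rate_threshold Ps Pr Cx r y) ltac:(lra)).
  split; nra.
Qed.

Lemma ex_RInt_outage_integrand L : 0 <= L -> ex_RInt outage_integrand 0 L.
Proof.
  intros HL; apply (ex_RInt_continuous (V := R_CompleteNormedModule)).
  intros z; rewrite Rmin_left, Rmax_right by lra; intros Hz.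
  apply (continuous_mult (K := R_AbsRing)); [apply continuous_gamma_pdf |].
  apply (continuous_comp (U := R_UniformSpace) (V := R_UniformSpace) (W := R_UniformSpace)
           (rate_threshold Ps Pr Cx r) (gamma_cdf ns ths)); [| apply continuous_gamma_cdf, Hths].
  apply (ex_derive_continuous (V := R_NormedModule)).
  pose proof (rate_radicand_pos Pr Cx r HPr Hr HCx0 HCx1 z ltac:(lra)).
  unfold rate_threshold, rate_radicand in *; auto_derive; simpl in *; lra.
Qed.

Lemma RInt_outage_integrand_le L : 0 <= L -> RInt outage_integrand 0 L <= gamma_cdf nr thr L.
Proof.
  intros HL; replace (gamma_cdf nr thr L) with (gamma_cdf nr thr L - gamma_cdf nr thr 0)
    by (rewrite gamma_cdf_0; ring).
  apply (is_RInt_le _ _ 0 L _ _ HL (RInt_correct (V := R_CompleteNormedModule) _ _ _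
           (ex_RInt_outage_integrand L HL)) (is_RInt_gamma_pdf nr thr Hthr 0 L)).
  intros x Hx; apply outage_integrand_bounds; lra.
Qed.

End Outage.

Section LowerBound.
Variables (Ps Pr Cx r : R) (ns nr : nat) (ths thr : R).
Hypotheses (HPs : 0 < Ps) (HPr : 0 < Pr) (Hr : 0 < r) (HCx0 : 0 <= Cx) (HCx1 : Cx < 1).
Hypotheses (Hths : 0 < ths) (Hthr : 0 < thr).

Let a := Psi r Cx / (Ps * ths).
Let c := Pr * a + / thr.
Let K := INR (fact nr) * thr ^ S nr.
Let coeff (m k : nat) := exp (- a) / K * (Binomial.C m k * (Pr ^ k * a ^ m) / INR (fact m)).

Let a_ge_0 : 0 <= a.
Proof. pose proof (Psi_ge_0 r Cx Hr (conj HCx0 HCx1)); apply Rdiv_le_0_compat; nra. Qed.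

Let c_pos : 0 < c.
Proof. pose proof (Rinv_0_lt_compat thr Hthr); unfold c; nra. Qed.

Let K_pos : 0 < K.
Proof. apply Rmult_lt_0_compat; [apply INR_fact_lt_0 | apply pow_lt; lra]. Qed.

Lemma coeff_ge_0 m k : 0 <= coeff m k.
Proof.
  pose proof a_ge_0; unfold coeff.
  apply Rmult_le_pos; [apply Rdiv_le_0_compat; [apply Rlt_le, exp_pos | exact K_pos] |].
  apply Rdiv_le_0_compat; [| apply INR_fact_lt_0].
  apply Rmult_le_pos; [| apply Rmult_le_pos; apply pow_le; lra].
  unfold Binomial.C; apply Rdiv_le_0_compat; [apply pos_INR |].
  apply Rmult_lt_0_compat; apply INR_fact_lt_0.
Qed.

(* Binomial expansion of [(1 + Pr y)^m] in the Poisson sum. *)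
Lemma gamma_pdf_mul_poisson_cdf y :
  gamma_pdf (S nr) thr y * poisson_cdf ns (a * (1 + Pr * y)) =
  sum_f_R0 (fun m => sum_f_R0 (fun k =>
    coeff m k * (y ^ (k + nr) * exp (- c * y))) m) ns.
Proof.
  assert (Hexp : exp (- (a * (1 + Pr * y))) = exp (- a) * exp (- c * y) / exp (- y / thr)).
  { assert (exp (- y / thr) <> 0) by apply Rgt_not_eq, exp_pos.
    apply (Rmult_eq_reg_r (exp (- y / thr))); [| assumption].
    unfold Rdiv; rewrite Rmult_assoc, Rinv_l, Rmult_1_r, <- !exp_plus by assumption.
    f_equal; unfold c; field; lra. }
  set (X := y ^ nr * exp (- a) * exp (- c * y) / K).
  unfold gamma_pdf, poisson_cdf; rewrite Nat.sub_succ, Nat.sub_0_r; fold K; rewrite Hexp.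
  transitivity (X * sum_f_R0 (fun j => (a * (1 + Pr * y)) ^ j / INR (fact j)) ns).
  { unfold X; field; split; [lra | apply Rgt_not_eq, exp_pos]. }
  rewrite scal_sum; apply sum_eq; intros m Hm.
  rewrite (Rplus_comm 1), Rpow_mult_distr, binomial.
  replace (_ / INR (fact m) * X) with
    (X * a ^ m / INR (fact m) * sum_f_R0 (fun k => Binomial.C m k * (Pr * y) ^ k * 1 ^ (m - k)) m)
    by field_nonzero.
  rewrite scal_sum; apply sum_eq; intros k Hk.
  unfold coeff, X; rewrite pow1, pow_add, Rpow_mult_distr; field_nonzero.
Qed.

Lemma is_RInt_gamma_pdf_mul_poisson_cdf L :
  is_RInt (fun y => gamma_pdf (S nr) thr y * poisson_cdf ns (a * (1 + Pr * y))) 0 L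
    (sum_f_R0 (fun m => sum_f_R0 (fun k => coeff m k *
       (pow_exp_antideriv (k + nr) c L - pow_exp_antideriv (k + nr) c 0)) m) ns).
Proof.
  apply (is_RInt_ext (fun y => sum_f_R0 (fun m => sum_f_R0 (fun k =>
    coeff m k * (y ^ (k + nr) * exp (- c * y))) m) ns)).
  { intros; symmetry; apply gamma_pdf_mul_poisson_cdf. }
  apply is_RInt_sum_f_R0; intros m _; apply is_RInt_sum_f_R0; intros k _.
  apply (is_RInt_scal (V := R_NormedModule)), is_RInt_pow_exp, c_pos.
Qed.

Lemma one_minus_P_LB_sr :
  1 - P_LB_sr Ps Pr Cx r (S ns) (S nr) ths thr =
  sum_f_R0 (fun m => sum_f_R0 (fun k =>
    coeff m k * (INR (fact (k + nr)) / c ^ (k + nr + 1))) m) ns.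
Proof.
  unfold P_LB_sr; cbv zeta; fold a; rewrite !Nat.sub_succ, !Nat.sub_0_r; fold c K.
  match goal with |- 1 - (1 - ?X * ?Y) = _ => replace (1 - (1 - X * Y)) with (X * Y) by ring end.
  rewrite scal_sum; apply sum_eq; intros m Hm.
  rewrite Rmult_comm, scal_sum; apply sum_eq; intros k Hk.
  replace (k + S nr - 1)%nat with (k + nr)%nat by lia.
  replace (k + S nr)%nat with (k + nr + 1)%nat by lia.
  unfold coeff; field_nonzero.
Qed.

Lemma RInt_gamma_pdf_mul_poisson_cdf_le L : 0 <= L ->
  RInt (fun y => gamma_pdf (S nr) thr y * poisson_cdf ns (a * (1 + Pr * y))) 0 L
  <= 1 - P_LB_sr Ps Pr Cx r (S ns) (S nr) ths thr.
Proof.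
  intros HL; rewrite (is_RInt_unique _ _ _ _ (is_RInt_gamma_pdf_mul_poisson_cdf L)).
  rewrite one_minus_P_LB_sr; apply sum_Rle; intros m Hm; apply sum_Rle; intros k Hk.
  apply Rmult_le_compat_l; [apply coeff_ge_0 |].
  rewrite pow_exp_antideriv_0 by exact c_pos.
  pose proof (pow_exp_antideriv_le_0 c c_pos (k + nr) L HL); lra.
Qed.

Lemma RInt_outage_integrand_ge L : 0 <= L ->
  gamma_cdf nr thr L - (1 - P_LB_sr Ps Pr Cx r (S ns) (S nr) ths thr)
  <= RInt (outage_integrand Ps Pr Cx r ns nr ths thr) 0 L.
Proof.
  intros HL.
  set (q := fun y => gamma_pdf (S nr) thr y * poisson_cdf ns (a * (1 + Pr * y))).
  pose proof (RInt_gamma_pdf_mul_poisson_cdf_le L HL) as Hq; fold q in Hq.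
  apply Rle_trans with (gamma_cdf nr thr L - gamma_cdf nr thr 0 - RInt q 0 L);
    [rewrite gamma_cdf_0; lra |].
  apply (is_RInt_le (fun y => gamma_pdf (S nr) thr y - q y)
           (outage_integrand Ps Pr Cx r ns nr ths thr) 0 L); [exact HL | | |].
  - apply (is_RInt_minus (V := R_NormedModule)); [apply is_RInt_gamma_pdf, Hthr |].
    apply (RInt_correct (V := R_CompleteNormedModule)).
    eexists; apply is_RInt_gamma_pdf_mul_poisson_cdf.
  - apply (RInt_correct (V := R_CompleteNormedModule)), ex_RInt_outage_integrand; auto.
  - intros y Hy; unfold q, outage_integrand.
    pose proof (gamma_pdf_ge_0 (S nr) thr y Hthr ltac:(lra)).
    assert (Hpsi : gamma_cdf ns ths (Psi r Cx * (1 + Pr * y) / Ps)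
                   = 1 - poisson_cdf ns (a * (1 + Pr * y)))
      by (unfold gamma_cdf, a; do 2 f_equal; field; lra).
    assert (0 <= Psi r Cx * (1 + Pr * y) / Ps).
    { pose proof a_ge_0; assert (0 <= Pr * y) by nra.
      replace (Psi r Cx * (1 + Pr * y) / Ps) with (a * ths * (1 + Pr * y))
        by (unfold a; field; lra).
      apply Rmult_le_pos; nra. }
    pose proof (gamma_cdf_le ns ths Hths _ _ ltac:(eassumption)
                  (Psi_le_rate_threshold Ps Pr Cx r HPs HPr Hr HCx0 HCx1 y ltac:(lra))).
    nra.
Qed.

End LowerBound.

Theorem lemma3 (Ps Pr : R) (msr mrr : nat) (pisr pirr : R) (r Cx : R) :
  0 < Ps -> 0 < Pr -> (1 <= msr)%nat -> (1 <= mrr)%nat ->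
  0 < pisr -> 0 < pirr -> 0 < r -> 0 <= Cx < 1 ->
  exists p,
    is_outage_sr Ps Pr Cx r msr mrr (pisr / INR msr) (pirr / INR mrr) p /\
    P_LB_sr Ps Pr Cx r msr mrr (pisr / INR msr) (pirr / INR mrr) <= p.
Proof.
  intros HPs HPr Hmsr Hmrr Hpisr Hpirr Hr [HCx0 HCx1].
  destruct msr as [|ns]; [lia |]; destruct mrr as [|nr]; [lia |].
  set (ths := pisr / INR (S ns)); set (thr := pirr / INR (S nr)).
  assert (Hths : 0 < ths) by (apply Rdiv_lt_0_compat; [| apply lt_0_INR; lia]; lra).
  assert (Hthr : 0 < thr) by (apply Rdiv_lt_0_compat; [| apply lt_0_INR; lia]; lra).
  destruct (is_RInt_0_infty_of_bounded (outage_integrand Ps Pr Cx r ns nr ths thr) 1)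
    as [p [Hp Hle]].
  - intros; apply ex_RInt_outage_integrand; auto.
  - intros; apply outage_integrand_bounds; auto.
  - intros L HL; eapply Rle_trans; [apply RInt_outage_integrand_le | apply gamma_cdf_le_1]; auto.
  - exists p; split.
    + exists (fun y => gamma_cdf ns ths (rate_threshold Ps Pr Cx r y)); split; [| exact Hp].
      intros; apply is_RInt_0_infty_outage_given; auto.
    + apply Rle_plus_epsilon; intros eps Heps.
      destruct (gamma_cdf_near_1 nr thr Hthr eps Heps) as [L [HL Hnear]].
      pose proof (RInt_outage_integrand_ge Ps Pr Cx r ns nr ths thr
                    HPs HPr Hr HCx0 HCx1 Hths Hthr L HL).
      pose proof (Hle L HL); lra.
Qed.
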